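(* For every integer $n\ge 1$, as rational functions of $x,x_0,x_1$, $$P_n(x;q^{\frac12}x_0,x_1)=P_n(x;x_0,x_1)+\lambda_n(x_0,x_1)\,P_{n-1}(x;x_0,x_1),$$ where $$\lambda_n(x_0,x_1)=\frac{q^{-\frac12}(1-q^n)^2\left(1-\frac{q^n}{x_1^2}\right)^2}{x_0^2\left(1-\frac{q^{2n-1}}{x_0^2x_1^2}\right)\left(1-\frac{q^{2n}}{x_0^2x_1^2}\right)}.$$
   Context: Let $q$ be a complex parameter with $0<|q|<1$, with a fixed choice of $q^{1/4}$ and $q^{k/4}:=(q^{1/4})^k$; $x,x_0,x_1$ are indeterminates. Notation: $(y)_n=(y;q)_n=\prod_{i=1}^{n}(1-yq^{i-1})$, $(y_1,\dots,y_k)_n=(y_1)_n\cdots(y_k)_n$. For $n\ge 0$ define the (reduced) Askey–Wilson polynomial $$P_n(x;x_0,x_1)=(-1)^nq^{-\frac n2}\frac{\left(q,\frac{q}{x_0^2},\frac{q}{x_1^2}\right)_n}{\left(\frac{q^{n+1}}{x_0^2x_1^2}\right)_n}\sum_{k=0}^{n}q^k\frac{\left(q^{-n},\frac{q^{n+1}}{x_0^2x_1^2}\right)_k}{\left(q,q,\frac{q}{x_0^2},\frac{q}{x_1^2}\right)_k}\,\left(-q^{\frac12}x,-q^{\frac12}x^{-1}\right)_k .$$ This is the Askey–Wilson polynomial $P_n^{(a,b,c,d)}(x)=\frac{(ab,ac,ad)_n}{a^n(abcdq^{n-1})_n}\sum_{k=0}^n\frac{(q^{-n},q^{n-1}abcd,ax,ax^{-1})_k}{(q,ab,ac,ad)_k}q^k$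 with $(a,b,c,d)=(-q^{1/2},-q^{1/2},-q^{1/2}/x_0^2,-q^{1/2}/x_1^2)$; it is a symmetric Laurent polynomial in $x$ of the form $x^n+x^{-n}+$(lower terms). *)

From HB Require Import structures.
From mathcomp Require Import all_boot all_order all_algebra.
From mathcomp Require Import reals.
From mathcomp Require Import complex.
From mathcomp Require Import mpoly.
Set Implicit Arguments. Unset Strict Implicit. Unset Printing Implicit Defensive.
Import GRing.Theory Num.Theory.
Local Open Scope ring_scope.

Definition qpoch (K : fieldType) (q y : K) (n : nat) : K :=
  \prod_(i < n) (1 - y * q ^+ i).

(* The reduced Askey-Wilson polynomial P_n(x; x0, x1), with the base q
   given through its fixed fourth root t = q^(1/4): q = t^4, q^(1/2) = t^2. *)
Definition AWP (K : fieldType) (t : K) (n : nat) (x x0 x1 : K) : K :=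
  let q := t ^+ 4 in
  let sq := t ^+ 2 in
  (-1) ^+ n * sq ^- n
  * (qpoch q q n * qpoch q (q / x0 ^+ 2) n * qpoch q (q / x1 ^+ 2) n)
  / qpoch q (q ^+ n.+1 / (x0 ^+ 2 * x1 ^+ 2)) n
  * \sum_(k < n.+1)
      q ^+ k
      * (qpoch q (q ^- n) k * qpoch q (q ^+ n.+1 / (x0 ^+ 2 * x1 ^+ 2)) k)
      / (qpoch q q k * qpoch q q k * qpoch q (q / x0 ^+ 2) k
         * qpoch q (q / x1 ^+ 2) k)
      * (qpoch q (- (sq * x)) k * qpoch q (- (sq / x)) k).

Definition AWlambda (K : fieldType) (t : K) (n : nat) (x0 x1 : K) : K :=
  let q := t ^+ 4 in
  let sq := t ^+ 2 in
  sq ^-1 * (1 - q ^+ n) ^+ 2 * (1 - q ^+ n / x1 ^+ 2) ^+ 2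
  / (x0 ^+ 2 * (1 - q ^+ (n.*2).-1 / (x0 ^+ 2 * x1 ^+ 2))
              * (1 - q ^+ (n.*2) / (x0 ^+ 2 * x1 ^+ 2))).

Definition RatFun3 (R : realType) : fieldType := {fraction {mpoly R[i][3]}}.

Definition rfC (R : realType) (c : R[i]) : RatFun3 R :=
  @FracField.tofrac _ (c%:MP : {mpoly R[i][3]}).

(* the indeterminates: j = 0 is x, j = 1 is x0, j = 2 is x1 *)
Definition rfX (R : realType) (j : 'I_3) : RatFun3 R :=
  @FracField.tofrac _ ('X_j : {mpoly R[i][3]}).

From HB Require Import structures.
From mathcomp Require Import all_boot all_order all_algebra.
From mathcomp Require Import reals complex mpoly.
From mathcomp Require Import ring zify.
Set Implicit Arguments. Unset Strict Implicit. Unset Printing Implicit Defensive.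
Import Order.TTheory GRing.Theory Num.Theory.
Local Open Scope ring_scope.

(* Expand [P_n] in the basis [(-q^(1/2) x, -q^(1/2)/x; q)_k].  After cancelling
   the Pochhammer quotients, the k-th coefficient depends on [u = x0^2] only
   through [(q^(k+1)/u; q)_(n-k) / (q^(n+k+1)/(u x1^2); q)_(n-k)], so the shift
   [u -> q u] acts on each coefficient by explicit one-factor corrections.  The
   relation then holds coefficientwise: for [k = n] both sides agree because
   this coefficient does not involve [x0, x1] at all, and for [k < n] it
   reduces to an identity between rational functions of [q^k], [q^(n-k)], [u]
   and [x1^2].  In [C(x, x0, x1)] all the Pochhammer symbols involved are
   nonzero since [q] is not a root of unity and [x0^2], [x1^2], [x0^2 x1^2]
   are not constants. *)

Lemma subr_neq0_div (K : fieldType) (w y : K) : w != 0 -> 1 - y / w != 0 -> w - y != 0.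
Proof. by move=> w0; apply: contra; rewrite subr_eq0 => /eqP <-; rewrite divff // subrr. Qed.

Section QPochhammer.

Variables (K : fieldType) (q : K).

Lemma qpoch0 y : qpoch q y 0 = 1.
Proof. exact: big_ord0. Qed.

Lemma qpochS y k : qpoch q y k.+1 = qpoch q y k * (1 - y * q ^+ k).
Proof. exact: big_ord_recr. Qed.

Lemma qpochSl y k : qpoch q y k.+1 = (1 - y) * qpoch q (y * q) k.
Proof.
rewrite /qpoch big_ord_recl expr0 mulr1; congr (_ * _).
by apply: eq_bigr => i _; rewrite /bump /= exprS mulrA.
Qed.

Lemma qpochD y k e : qpoch q y (k + e) = qpoch q y k * qpoch q (y * q ^+ k) e.
Proof.
rewrite /qpoch big_split_ord /=; congr (_ * _).
by apply: eq_bigr => i _; rewrite exprD mulrA.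
Qed.

Lemma qpoch_shift y k : (1 - y) * qpoch q (y * q) k = qpoch q y k * (1 - y * q ^+ k).
Proof. by rewrite -qpochS qpochSl. Qed.

Lemma qpoch_shiftE y k :
  1 - y * q ^+ k != 0 -> qpoch q y k = (1 - y) * qpoch q (y * q) k / (1 - y * q ^+ k).
Proof. by move=> nz; rewrite qpoch_shift mulfK. Qed.

Lemma qpoch_shiftSE y k :
  1 - y != 0 ->
  qpoch q (y * q) k.+1 = qpoch q y k * (1 - y * q ^+ k) * (1 - y * q ^+ k.+1) / (1 - y).
Proof. by move=> nz; rewrite -qpochS -qpoch_shift [RHS]mulrC mulKf. Qed.

Lemma qpoch_neq0 y k : (forall i, (i < k)%N -> y * q ^+ i != 1) -> qpoch q y k != 0.
Proof. by move=> yq1; apply/prodf_neq0 => i _; rewrite subr_eq0 eq_sym yq1. Qed.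

Lemma expr_divMX a b w : q ^+ a / w * q ^+ b = q ^+ (a + b) / w.
Proof. by rewrite mulrAC -exprD. Qed.

Lemma expr_div_neq1 a w : q ^+ a != w -> q ^+ a / w != 1.
Proof.
have [-> _|w0] := eqVneq w 0; first by rewrite invr0 mulr0 eq_sym oner_eq0.
by apply: contra => /eqP qw1; rewrite -[w]mul1r -qw1 divfK.
Qed.

Lemma qpoch_expr_div_neq0 a w k :
  (forall i, (i < k)%N -> q ^+ (a + i) != w) -> qpoch q (q ^+ a / w) k != 0.
Proof.
by move=> qw; apply: qpoch_neq0 => i lt_ik; rewrite expr_divMX expr_div_neq1 ?qw.
Qed.

End QPochhammer.

(* The coefficient of [(-q^(1/2) x, -q^(1/2)/x; q)_k] in [P_n] for [n = k + e],
   with [u = x0^2] and [v = x1^2].  Indexing by [e] avoids truncated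
   subtraction [n - k] in the lengths of the remaining Pochhammer symbols. *)
Definition AWcoef (K : fieldType) (t : K) (k e : nat) (u v : K) : K :=
  let q := t ^+ 4 in
  (-1) ^+ (k + e) * (t ^+ 2) ^- (k + e) * qpoch q q (k + e)
  * q ^+ k * qpoch q (q ^- (k + e)) k / qpoch q q k ^+ 2
  * (qpoch q (q ^+ k.+1 / u) e * qpoch q (q ^+ k.+1 / v) e
     / qpoch q (q ^+ (k + e + k).+1 / (u * v)) e).

Lemma AWcoef_e0 (K : fieldType) (t u v u' v' : K) k :
  AWcoef t k 0 u v = AWcoef t k 0 u' v'.
Proof. by rewrite /AWcoef !qpoch0. Qed.

Lemma AWP_AWcoef (K : fieldType) (t x x0 x1 : K) n :
    let q := t ^+ 4 in
    t != 0 -> (forall j, (0 < j)%N -> q ^+ j != 1) ->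
    (forall j, (0 < j)%N -> q ^+ j != x0 ^+ 2) ->
    (forall j, (0 < j)%N -> q ^+ j != x1 ^+ 2) ->
    (forall j, (0 < j)%N -> q ^+ j != x0 ^+ 2 * x1 ^+ 2) ->
  AWP t n x x0 x1 = \sum_(k < n.+1) AWcoef t k (n - k) (x0 ^+ 2) (x1 ^+ 2)
    * (qpoch q (- (t ^+ 2 * x)) k * qpoch q (- (t ^+ 2 / x)) k).
Proof.
move=> q t0 hq hu hv huv; rewrite /AWP mulr_sumr; apply: eq_bigr => -[k /= le_kn] _.
rewrite ltnS in le_kn; set e := (n - k)%N; have -> : n = (k + e)%N by rewrite subnKC.
set u := x0 ^+ 2; set v := x1 ^+ 2.
have split_len a w : qpoch q (q ^+ a / w) (k + e)
    = qpoch q (q ^+ a / w) k * qpoch q (q ^+ (a + k) / w) e.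
  by rewrite qpochD expr_divMX.
rewrite -/q -[q in q / u]expr1 -[q in q / v]expr1 !split_len /AWcoef -/q !add1n addSn.
have Qk0 : qpoch q q k != 0 by apply: qpoch_neq0 => i _; rewrite -exprS hq.
have Uk0 : qpoch q (q ^+ 1 / u) k != 0.
  by rewrite qpoch_expr_div_neq0 // => i _; rewrite hu.
have Vk0 : qpoch q (q ^+ 1 / v) k != 0.
  by rewrite qpoch_expr_div_neq0 // => i _; rewrite hv.
have Wk0 : qpoch q (q ^+ (k + e).+1 / (u * v)) k != 0.
  by rewrite qpoch_expr_div_neq0 // => i _; rewrite huv.
have We0 : qpoch q (q ^+ (k + e + k).+1 / (u * v)) e != 0.
  by rewrite qpoch_expr_div_neq0 // => i _; rewrite huv.
by field; rewrite We0 Qk0 Uk0 Vk0 Wk0 !expf_neq0.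
Qed.

Section Contiguity.

Variables (K : fieldType) (t x0 x1 : K).
Local Notation q := (t ^+ 4).
Local Notation u := (x0 ^+ 2).
Local Notation v := (x1 ^+ 2).
Hypotheses (t0 : t != 0) (x00 : x0 != 0) (x10 : x1 != 0).
Hypothesis q_not_root1 : forall j, (0 < j)%N -> q ^+ j != 1.
Hypothesis q_neq_u : forall j, q ^+ j != u.
Hypothesis q_neq_v : forall j, q ^+ j != v.
Hypothesis q_neq_uv : forall j, q ^+ j != u * v.

Lemma AWcoef_contiguous k e :
  AWcoef t k e.+1 (q * u) v
  = AWcoef t k e.+1 u v + AWlambda t (k + e).+1 x0 x1 * AWcoef t k e u v.
Proof.
have q0 : q != 0 by rewrite expf_neq0.
rewrite /AWcoef /AWlambda /= !addnS.
set a := q ^+ (k + e + k).+1 / (u * v).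
have -> : q ^+ k.+1 / (q * u) = q ^+ k / u.
  by rewrite [q ^+ k.+1]exprS; field; rewrite t0 x00.
have -> : q ^+ ((k + e).+1 + k).+1 / (q * u * v) = a.
  by rewrite /a addSn [q ^+ _.+1]exprS; field; rewrite t0 x00 x10.
have a1 : 1 - a != 0 by rewrite subr_eq0 eq_sym expr_div_neq1.
have N1 : 1 - q ^- (k + e).+1 * q ^+ k != 0.
  rewrite subr_eq0 eq_sym -addnS exprD invfM mulrAC mulVf ?expf_neq0 // mul1r.
  by rewrite invr_eq1 q_not_root1.
have yq : q ^- (k + e).+1 * q = q ^- (k + e) by rewrite exprSr invfM mulfVK.
have aq : q ^+ ((k + e).+1 + k).+1 / (u * v) = a * q.
  by rewrite /a -[q in _ = _ * q]expr1 expr_divMX addn1 addSn.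
have L1 : q ^+ (k + e).*2.+1 / (u * v) = a * q ^+ e.
  by rewrite /a expr_divMX; congr (_ ^+ _ / _); lia.
have L2 : q ^+ (k + e).+1.*2 / (u * v) = a * q ^+ e.+1.
  by rewrite /a expr_divMX; congr (_ ^+ _ / _); lia.
rewrite (qpoch_shiftE N1) yq aq (qpoch_shiftSE _ e a1) L1 L2.
rewrite [qpoch _ (q ^+ k / u) _]qpochSl [q ^+ k / u * q]mulrAC -exprSr !qpochS.
have Pa0 : qpoch q a e != 0 by rewrite qpoch_expr_div_neq0.
have Pq0 : qpoch q q k != 0 by apply: qpoch_neq0 => i _; rewrite -exprS q_not_root1.
have qe1 : q * q ^+ e - 1 != 0 by rewrite -exprS subr_eq0 q_not_root1.
have D1 : 1 - a * q ^+ e != 0 by rewrite subr_eq0 eq_sym /a expr_divMX expr_div_neq1.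
have D2 : 1 - a * q ^+ e.+1 != 0 by rewrite subr_eq0 eq_sym /a expr_divMX expr_div_neq1.
(* Turning the powers of [q] and the squares into atoms keeps [field] from
   unfolding them; its side conditions are then the numerators [U * V - _]
   of [a1], [D1] and [D2]. *)
move: a1 qe1 Pa0 Pq0 D1 D2; rewrite /a.
rewrite ![_ ^+ (k + e).+1]exprS ![_ ^+ k.+1]exprS [q ^+ e.+1]exprS.
rewrite [q ^+ (k + e + k).+1]exprS !exprD.
move: (q ^+ k) (q ^+ e) (expf_neq0 k q0) (expf_neq0 e q0) => Qk Qe Qk0 Qe0.
move: (t ^+ 4) (t ^+ 2) q0 (expf_neq0 2 t0) (expf_neq0 2 x00) (expf_neq0 2 x10).
move=> Q S Q0 S0; move: (x0 ^+ 2) (x1 ^+ 2) => U V U0 V0 a1 qe1 Pa0 Pq0 D1 D2.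
rewrite [_ / _ * Qe]mulrAC in D1; rewrite [_ / _ * (Q * Qe)]mulrAC in D2.
have UV0 := mulf_neq0 U0 V0.
field; rewrite Pq0 qe1 (subr_neq0_div UV0 a1) (subr_neq0_div UV0 D1).
rewrite (subr_neq0_div UV0 D2).
by do ?[apply/andP; split]; rewrite ?expf_neq0.
Qed.

Lemma AWP_contiguous x m :
  AWP t m.+1 x (t ^+ 2 * x0) x1
  = AWP t m.+1 x x0 x1 + AWlambda t m.+1 x0 x1 * AWP t m x x0 x1.
Proof.
have sq_x0 : (t ^+ 2 * x0) ^+ 2 = q * u by rewrite exprMn -exprM.
have q0 : q != 0 by rewrite expf_neq0.
rewrite !AWP_AWcoef // sq_x0; last 2 first.
- by case=> // j _; rewrite [q ^+ _.+1]exprS (inj_eq (mulfI q0)) q_neq_u.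
- by case=> // j _; rewrite [q ^+ _.+1]exprS -[q * u * v]mulrA (inj_eq (mulfI q0)).
rewrite big_ord_recr [in RHS]big_ord_recr /= subnn (AWcoef_e0 _ _ _ u v).
rewrite mulr_sumr -addrA [_ + \sum_(_ < _) _]addrC addrA.
congr (_ + _); rewrite -big_split; apply: eq_bigr => -[i /= lt_im] _.
by rewrite subSn // AWcoef_contiguous subnKC // mulrDl -!mulrA.
Qed.

End Contiguity.

Lemma rfCX (R : realType) (c : R[i]) n : rfC c ^+ n = rfC (c ^+ n).
Proof. by rewrite /rfC !rmorphXn. Qed.

Lemma rfC0 (R : realType) : rfC 0 = 0 :> RatFun3 R.
Proof. by rewrite /rfC mpolyC0 tofrac0. Qed.

Lemma rfC1 (R : realType) : rfC 1 = 1 :> RatFun3 R.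
Proof. by rewrite /rfC mpolyC1 rmorph1. Qed.

Lemma rfC_inj (R : realType) : injective (@rfC R).
Proof. by move=> c d /eqP; rewrite /rfC tofrac_eq mpolyC_eq => /eqP. Qed.

Lemma rfC_neq_tofrac (R : realType) (c : R[i]) (p : {mpoly R[i][3]}) :
  meval (fun _ => 0) p != meval (fun _ => 1) p -> rfC c != FracField.tofrac p.
Proof.
by apply: contra => /eqP; rewrite /rfC => /eqP; rewrite tofrac_eq => /eqP <-; rewrite !mevalC.
Qed.

Lemma rfX_neq0 (R : realType) (i : 'I_3) : rfX R i != 0.
Proof.
have := @rfC_neq_tofrac R 0 'X_i; rewrite !mevalXU rfC0 /rfX eq_sym.
by move/(_ (oner_neq0 _)); rewrite eq_sym.
Qed.

Lemma rfX_sqr (R : realType) (i : 'I_3) :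
  rfX R i ^+ 2 = FracField.tofrac ('X_i ^+ 2 : {mpoly R[i][3]}).
Proof. by rewrite /rfX rmorphXn. Qed.

Lemma meval_cst_Xsqr (R : realType) (c : R[i]) (i : 'I_3) :
  meval (fun _ => c) ('X_i ^+ 2 : {mpoly R[i][3]}) = c ^+ 2.
Proof. by rewrite expr2 mevalM mevalXU. Qed.

Lemma rfC_neq_rfX_sqr (R : realType) (c : R[i]) (i : 'I_3) : rfC c != rfX R i ^+ 2.
Proof.
by rewrite rfX_sqr rfC_neq_tofrac // !meval_cst_Xsqr expr0n expr1n eq_sym oner_eq0.
Qed.

Lemma rfC_neq_rfX_sqrM (R : realType) (c : R[i]) :
  rfC c != rfX R 1 ^+ 2 * rfX R 2 ^+ 2.
Proof.
rewrite !rfX_sqr -rmorphM rfC_neq_tofrac // !mevalM !mevalXU.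
by rewrite !mul0r !mulr1 eq_sym oner_eq0.
Qed.

Theorem mainTheorem1 (R : realType) (t : R[i])
    (hq0 : 0 < `|t ^+ 4|) (hq1 : `|t ^+ 4| < 1) (n : nat) (hn : (1 <= n)%N) :
  let x  := @rfX R 0 in
  let x0 := @rfX R 1 in
  let x1 := @rfX R 2 in
  AWP (rfC t) n x (rfC t ^+ 2 * x0) x1
  = AWP (rfC t) n x x0 x1
    + AWlambda (rfC t) n x0 x1 * AWP (rfC t) n.-1 x x0 x1.
Proof.
move=> x x0 x1; case: n hn => // m _.
have t40 : t ^+ 4 != 0 by rewrite -normr_gt0.
apply: AWP_contiguous => [|||j|j|j|j]; rewrite ?rfCX.
- by rewrite -rfC0 (inj_eq (@rfC_inj R)); apply: contraNneq t40 => ->; rewrite expr0n.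
- exact: rfX_neq0.
- exact: rfX_neq0.
- move=> j0; rewrite -rfC1 (inj_eq (@rfC_inj R)); apply/eqP => qj1.
  have := exprn_ilt1 j (normr_ge0 (t ^+ 4)) hq1.
  by rewrite -normrX qj1 normr1 ltxx -lt0n j0.
- exact: rfC_neq_rfX_sqr.
- exact: rfC_neq_rfX_sqr.
- exact: rfC_neq_rfX_sqrM.
Qed.
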